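(* Let $Q\subset V$ be a polytope and let $\mathscr V$ be the vertex set of some deformation of $Q$. Let $\mathrm{Def}(Q)|_{\mathscr V}=\{Q'\in\mathrm{Def}(Q): Q'\subseteq Q,\ \mathrm{Vert}(Q')\subseteq\mathscr V\}$, let $\min(\Sigma_Q^\vee)$ be the set of tangent cones of $Q$ at its vertices, let $X_{\mathscr V}=\{C+v: C\in\min(\Sigma_Q^\vee), v\in\mathscr V\}$, and define $\mathcal F_{\mathscr V}:\mathbb I(\mathrm{Def}(Q)|_{\mathscr V})\to\mathbb Z^{X_{\mathscr V}}$ by $\mathbf 1_P\mapsto\sum_{C+v\in X_{\mathscr V},\ C+v\text{ tightly contains }P}\mathbf e_{C+v}$. Then there is an injective $\mathbb Z$-linear map $\mathcal E_{\mathscr V}:\mathbb Z^{X_{\mathscr V}}\to\mathbb Z^{\oplus\mathrm{tran}(\Sigma_Q^\vee)}$ such that $\mathcal E_{\mathscr V}\circ\mathcal F_{\mathscr V}=\mathcal F\circ\iota$, where $\iota:\mathbb I(\mathrm{Def}(Q)|_{\mathscr V})\hookrightarrow\mathbb I(\mathrm{Def}^+(Q))$ is the inclusion and $\mathcal F:\mathbb I(\mathrm{Def}^+(Q))\to\mathbb Z^{\oplus\mathrm{tran}(\Sigma_Q^\vee)}$ is the map $\mathbf 1_P\mapsto\sum_{C+v\in\mathrm{tran}(\Sigma_Q^\vee),\ C+v\text{ tightly contains }P}\mathbf e_{C+v}$.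
   Context: $V$ is a finite-dimensional real vector space. $\mathbb I(\mathscr P)$ is the $\mathbb Z$-span in $\mathbb Z^V$ of indicator functions $\mathbf 1_P$, $P\in\mathscr P$. For a polyhedron $Q$, $\Sigma_Q$ is its outer normal fan; the tangent cone at a face $F$ is $C_F=\mathrm{Cone}(v'-v\mid v\in F,v'\in Q)$; $\Sigma_Q^\vee$ is the set of tangent cones and $\mathrm{tran}(\Sigma_Q^\vee)=\{C+v:C\in\Sigma_Q^\vee,v\in V\}$. $P$ is an extended deformation of $Q$ if each cone of $\Sigma_P$ is a union of cones of $\Sigma_Q$ ($\mathrm{Def}^+(Q)$ = set of these), and a deformation if moreover $\Sigma_P$ and $\Sigma_Q$ have the same support ($\mathrm{Def}(Q)$ = set of these). $C+v$ tightly contains $P$ if $P\subseteq C+v$ and $P\cap(\mathrm{lineal}(C)+v)\ne\emptyset$. $\mathbb Z^{X}$ has basis $\{\mathbf e_x\}$. *)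

From HB Require Import structures.
From mathcomp Require Import all_boot all_order all_algebra.
From mathcomp Require Import boolp classical_sets functions cardinality reals.
Set Implicit Arguments. Unset Strict Implicit. Unset Printing Implicit Defensive.
Import Order.TTheory GRing.Theory Num.Theory.
Local Open Scope classical_set_scope.
Local Open Scope ring_scope.

Section PolyDefs.
Variables (R : realType) (n : nat).
Notation V := 'rV[R]_n.

(* standard pairing, identifying V with its dual *)
Definition dotp (u x : V) : R := \sum_(i < n) u ord0 i * x ord0 i.

Definition polyhedron (P : set V) : Prop :=
  exists s : seq (V * R), P = [set x | forall p, p \in s -> dotp p.1 x <= p.2].

Definition bounded_set (P : set V) : Prop :=
  exists M : R, forall x, P x -> forall i, `|x ord0 i| <= M.

Definition polytope (P : set V) : Prop :=
  [/\ polyhedron P, bounded_set P & P !=set0].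

Definition face (P F : set V) : Prop :=
  (exists u : V, F = [set x | P x /\ forall y, P y -> dotp u y <= dotp u x])
  /\ F !=set0.

Definition ncone (P F : set V) : set V :=
  [set u | forall x y, F x -> P y -> dotp u y <= dotp u x].

Definition nfan (P : set V) : set (set V) :=
  [set N | exists F, face P F /\ N = ncone P F].

Definition fan_support (P : set V) : set V :=
  [set u | exists N, nfan P N /\ N u].

Definition coarsens (P Q : set V) : Prop :=
  forall N, nfan P N ->
    exists S : set (set V), S `<=` nfan Q /\ N = [set u | exists K, S K /\ K u].

Definition Defp (Q : set V) : set (set V) :=
  [set P | [/\ polyhedron P, P !=set0 & coarsens P Q]].
Definition Def (Q : set V) : set (set V) :=
  [set P | Defp Q P /\ fan_support P = fan_support Q].

Definition Vert (P : set V) : set V := [set v | face P [set v]].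

Definition Def_restr (Q VV : set V) : set (set V) :=
  [set P | [/\ Def Q P, P `<=` Q & Vert P `<=` VV]].

Definition cone_gen (S : set V) : set V :=
  [set x | exists s : seq (R * V),
     (forall p, p \in s -> 0 <= p.1 /\ S p.2) /\ x = \sum_(p <- s) p.1 *: p.2].

Definition tcone (Q F : set V) : set V :=
  cone_gen [set w | exists v v', [/\ F v, Q v' & w = v' - v]].

Definition dual_fan (Q : set V) : set (set V) :=
  [set C | exists F, face Q F /\ C = tcone Q F].
Definition min_dual_fan (Q : set V) : set (set V) :=
  [set C | exists v, face Q [set v] /\ C = tcone Q [set v]].

Definition translate (C : set V) (v : V) : set V := [set c + v | c in C].

Definition tran (Q : set V) : set (set V) :=
  [set K | exists C v, dual_fan Q C /\ K = translate C v].

Definition XV (Q VV : set V) : set (set V) :=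
  [set K | exists C v, [/\ min_dual_fan Q C, VV v & K = translate C v]].

Definition lineal (C : set V) : set V := [set x | C x /\ C (- x)].

Definition tightly_contains (Q K P : set V) : Prop :=
  exists C v, [/\ dual_fan Q C, K = translate C v, P `<=` K &
                  (P `&` translate (lineal C) v) !=set0].

Definition indic (P : set V) : V -> int := fun x => if `[< P x >] then 1 else 0.

Definition zspan (S : set (set V)) : set (V -> int) :=
  [set f | exists s : seq (int * set V), (forall p, p \in s -> S p.2) /\
             f = (fun x => \sum_(p <- s) p.1 * indic p.2 x)].

Definition tight_vec (Q : set V) (X : set (set V)) (P : set V) : set V -> int :=
  fun K => if `[< X K /\ tightly_contains Q K P >] then 1 else 0.

(* Z^X (all functions supported on X) and Z^{(+) X} (finitely supported on X) *)
Definition ZX (X : set (set V)) : set (set V -> int) :=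
  [set g | forall K, ~ X K -> g K = 0].
Definition ZXfin (X : set (set V)) : set (set V -> int) :=
  [set g | ZX X g /\ finite_set [set K | g K != 0]].

End PolyDefs.

From HB Require Import structures.
From mathcomp Require Import all_boot all_order all_algebra.
From mathcomp Require Import boolp classical_sets functions cardinality reals.
From mathcomp Require Import lra.
Import Order.TTheory GRing.Theory Num.Theory.
Local Open Scope classical_set_scope.
Local Open Scope ring_scope.
Set Implicit Arguments. Unset Strict Implicit. Unset Printing Implicit Defensive.

(* The map E is the identity on the coordinates indexed by
   X_VV; a translated tangent cone K = C + v outside X_VV is written with a
   vertex w of Q whose tangent cone C_w lies in C (every face contains a
   vertex), and E g K sums g (C_w + u) over the u in VV with u - v in the
   lineality space of C.  E is Z-linear and injective (it restricts to the
   identity on X_VV), and it has finite support since Q has finitely many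
   faces and VV is finite.  For E o F_VV = F it suffices, by linearity, to
   treat an indicator 1_P with P in Def(Q)|_VV.  Since Sigma_P coarsens
   Sigma_Q with the same support, P has a vertex p in VV with P in p + C_w;
   as C_w is pointed, C_w + u tightly contains P exactly when u = p, and
   C + v tightly contains P exactly when p - v is in lineal(C). *)

Section Geometry.
Variables (R : realType) (n : nat).
Local Notation V := 'rV[R]_n.
Implicit Types (u x y : V).

Lemma dotpDr u x y : dotp u (x + y) = dotp u x + dotp u y.
Proof. by rewrite /dotp -big_split /=; apply: eq_bigr => i _; rewrite mxE mulrDr. Qed.

Lemma dotpDl u x y : dotp (x + y) u = dotp x u + dotp y u.
Proof. by rewrite /dotp -big_split /=; apply: eq_bigr => i _; rewrite mxE mulrDl. Qed.

Lemma dotpZr c u x : dotp u (c *: x) = c * dotp u x.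
Proof. by rewrite /dotp mulr_sumr; apply: eq_bigr => i _; rewrite mxE mulrCA. Qed.

Lemma dotp0r u : dotp u 0 = 0.
Proof. by rewrite /dotp big1 // => i _; rewrite mxE mulr0. Qed.

Lemma dotp0l u : dotp 0 u = 0.
Proof. by rewrite /dotp big1 // => i _; rewrite mxE mul0r. Qed.

Lemma dotpNr u x : dotp u (- x) = - dotp u x.
Proof. by rewrite -scaleN1r dotpZr mulN1r. Qed.

Lemma dotpBr u x y : dotp u (x - y) = dotp u x - dotp u y.
Proof. by rewrite dotpDr dotpNr. Qed.

Lemma dotp_sumr u (I : Type) (r : seq I) (P : pred I) (F : I -> V) :
  dotp u (\sum_(i <- r | P i) F i) = \sum_(i <- r | P i) dotp u (F i).
Proof. exact: (big_morph (dotp u) (dotpDr u) (dotp0r u)). Qed.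

Lemma dotp_suml u (I : Type) (r : seq I) (P : pred I) (F : I -> V) :
  dotp (\sum_(i <- r | P i) F i) u = \sum_(i <- r | P i) dotp (F i) u.
Proof.
elim: r => [|a r IH]; first by rewrite !big_nil dotp0l.
by rewrite !big_cons; case: (P a); rewrite ?dotpDl IH.
Qed.

Definition is_cone (C : set V) : Prop :=
  [/\ C 0, forall x y, C x -> C y -> C (x + y) &
      forall c x, 0 <= c -> C x -> C (c *: x)].

Lemma cone_gen0 (S : set V) : cone_gen S 0.
Proof. by exists [::]; split => //; rewrite big_nil. Qed.

Lemma cone_genD (S : set V) x y : cone_gen S x -> cone_gen S y -> cone_gen S (x + y).
Proof.
move=> [l1 [H1 ->]] [l2 [H2 ->]]; exists (l1 ++ l2); split; last by rewrite big_cat.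
by move=> p; rewrite mem_cat => /orP[/H1|/H2].
Qed.

Lemma cone_genZ (S : set V) c x : 0 <= c -> cone_gen S x -> cone_gen S (c *: x).
Proof.
move=> c0 [l [H ->]]; exists [seq (c * p.1, p.2) | p <- l]; split.
  by move=> p /mapP[q /H [q1 q2] ->] /=; split => //; exact: mulr_ge0.
by rewrite big_map scaler_sumr; apply: eq_bigr => p _; rewrite scalerA.
Qed.

Lemma cone_gen_sub (S : set V) : S `<=` cone_gen S.
Proof.
move=> x Sx; exists [:: (1, x)]; split; last by rewrite big_seq1 scale1r.
by move=> p; rewrite inE => /eqP -> /=.
Qed.

Lemma cone_gen_mono (S S' : set V) : S `<=` S' -> cone_gen S `<=` cone_gen S'.
Proof. by move=> SS x [l [H ->]]; exists l; split => // p /H [? /SS]. Qed.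

Lemma cone_gen_cone (S : set V) : is_cone (cone_gen S).
Proof. by split; [exact: cone_gen0 | exact: cone_genD | move=> c x; exact: cone_genZ]. Qed.

Lemma translateP (C : set V) v x : translate C v x <-> C (x - v).
Proof.
split; first by move=> [c Cc <-]; rewrite addrK.
by move=> Cx; exists (x - v) => //; rewrite subrK.
Qed.

Lemma linealD (C : set V) x y :
  is_cone C -> lineal C x -> lineal C y -> lineal C (x + y).
Proof.
move=> [_ CD _] [Cx Cx'] [Cy Cy']; split; first exact: CD.
by rewrite opprD; exact: CD.
Qed.

(* A translated cone determines the cone, and its apex up to the lineality
   space; this is what makes the coordinates e_{C+v} well defined. *)
Lemma translate_inj (C C' : set V) v v' : is_cone C -> is_cone C' ->
  translate C v = translate C' v' -> C = C' /\ lineal C' (v' - v).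
Proof.
move=> [C0 CD CZ] [C'0 C'D C'Z] E.
have HC x : C x <-> C' (x - (v' - v)).
  rewrite (_ : x - (v' - v) = x + v - v'); last by rewrite opprB addrA addrAC.
  split => h.
    have : translate C v (x + v) by apply/translateP; rewrite addrK.
    by rewrite E => /translateP.
  have : translate C' v' (x + v) by apply/translateP.
  by rewrite -E => /translateP; rewrite addrK.
have md : C' (- (v' - v)) by rewrite -[X in C' X]add0r; apply/HC.
have d : C' (v' - v).
  have := CZ 2%:R _ (ler0n _ _) (proj2 (HC (v' - v)) _); rewrite subrr => /(_ C'0).
  by move/HC; rewrite scaler_nat mulr2n addrK.
split; last by split.
apply/seteqP; split => x; first by move/HC => h; have := C'D _ _ h d; rewrite subrK.
by move=> h; apply/HC; exact: C'D.
Qed.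

Lemma translate_shift (C : set V) v v' : is_cone C -> lineal C (v' - v) ->
  translate C v = translate C v'.
Proof.
move=> [_ CD _] [d md]; apply/seteqP; split => x /translateP h; apply/translateP.
  by have := CD _ _ h md; rewrite opprB addrA subrK.
by have := CD _ _ h d; rewrite addrA subrK.
Qed.

Lemma small_step (c d : R) : 0 < d ->
  exists2 t, 0 < t & forall t', 0 < t' <= t -> t' * c <= d.
Proof.
move=> d0; have c1 : 0 < `|c| + 1 by rewrite ltr_wpDl.
exists (d / (`|c| + 1)); first by rewrite divr_gt0.
move=> t' /andP[t0 tt].
have h1 : t' * c <= t' * `|c| by apply: ler_wpM2l; [exact: ltW | exact: ler_norm].
have h2 : t' * `|c| <= d / (`|c| + 1) * `|c| by rewrite ler_wpM2r.
have h3 : d / (`|c| + 1) * `|c| <= d / (`|c| + 1) * (`|c| + 1).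
  by rewrite ler_wpM2l ?lerDl // divr_ge0 // ltW.
rewrite divfK ?gt_eqF // in h3; lra.
Qed.

Lemma uniform_small_step (I : finType) (P : I -> R -> Prop) :
  (forall i, exists2 t, 0 < t & forall t', 0 < t' <= t -> P i t') ->
  exists2 t, 0 < t & forall i t', 0 < t' <= t -> P i t'.
Proof.
move=> H.
suff: forall r : seq I, exists2 t, 0 < t & forall i t', i \in r -> 0 < t' <= t -> P i t'.
  by move=> /(_ (enum I)) [t t0 Ht]; exists t => // i t'; apply: Ht; rewrite mem_enum.
elim => [|i r [t t0 Ht]]; first by exists 1.
have [t1 t10 Ht1] := H i.
exists (Order.min t t1); first by rewrite lt_min t0 t10.
move=> j t'; rewrite inE le_min => /orP[/eqP ->|jr] /andP[t'0 /andP[h1 h2]].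
  by apply: Ht1; rewrite t'0 h2.
by apply: Ht => //; rewrite t'0 h1.
Qed.

Definition poly (s : seq (V * R)) : set V :=
  [set x | forall p, p \in s -> dotp p.1 x <= p.2].
Definition ca (s : seq (V * R)) (i : 'I_(size s)) : V := (nth (0, 0) s i).1.
Definition cb (s : seq (V * R)) (i : 'I_(size s)) : R := (nth (0, 0) s i).2.

Definition exposed (P : set V) u : set V :=
  [set x | P x /\ forall y, P y -> dotp u y <= dotp u x].

Lemma polyP s x : poly s x <-> forall i : 'I_(size s), dotp (ca i) x <= cb i.
Proof.
split => [H i|H p /(nthP (0, 0)) [i ilt <-]]; first by apply: H; rewrite mem_nth.
exact: (H (Ordinal ilt)).
Qed.

Definition tightset (s : seq (V * R)) (A : {set 'I_(size s)}) : set V :=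
  [set x | poly s x /\ forall i, i \in A -> dotp (ca i) x = cb i].
Definition actF s (G : set V) : {set 'I_(size s)} :=
  [set i | `[< forall x, G x -> dotp (ca i) x = cb i >]].
Arguments actF : clear implicits.

Lemma face_sub (P G : set V) : face P G -> G `<=` P.
Proof. by move=> [[u ->] _] x []. Qed.

(* A face has a relative interior point: a point at which every constraint
   that is not tight on the whole face is strict (midpoints preserve the
   face and accumulate strict constraints). *)
Lemma face_relint s G : face (poly s) G ->
  exists2 g, G g & forall i, i \notin actF s G -> dotp (ca i) g < cb i.
Proof.
move=> [[u Gdef] [g0 Gg0]].
have GP x : G x <-> exposed (poly s) u x by rewrite Gdef.
suff: forall r : seq 'I_(size s), exists2 g, G g &
       forall i, i \in r -> i \notin actF s G -> dotp (ca i) g < cb i.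
  by move=> /(_ (enum 'I_(size s))) [g Gg Hg]; exists g => // i; apply: Hg; rewrite mem_enum.
elim => [|i r [g Gg Hg]]; first by exists g0.
case: (boolP (i \in actF s G)) => iA.
  by exists g => // j; rewrite inE => /orP[/eqP ->|]; [rewrite iA|apply: Hg].
move: iA; rewrite inE => /asboolPn /existsNP [x /not_implyP [Gx nx]].
have [Px Mx] := (GP x).1 Gx; have [Pg Mg] := (GP g).1 Gg.
have xlt : dotp (ca i) x < cb i by rewrite lt_neqAle (polyP _ _).1 // andbT; apply/eqP.
exists (2^-1 *: (g + x)).
  apply/GP; split.
    apply/polyP => j; rewrite dotpZr dotpDr.
    by have := (polyP _ _).1 Pg j; have := (polyP _ _).1 Px j; lra.
  by move=> y Py; rewrite dotpZr dotpDr; have := Mg y Py; have := Mx y Py; lra.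
move=> j; rewrite inE dotpZr dotpDr => /orP[/eqP -> _|jr jA].
  by have := (polyP _ _).1 Pg i; lra.
by have := Hg j jr jA; have := (polyP _ _).1 Px j; lra.
Qed.

Lemma face_tightset s G : face (poly s) G -> G = tightset (actF s G).
Proof.
move=> fG; have [g Gg Hg] := face_relint fG.
move: fG => [[u Gdef] _].
have GP x : G x <-> exposed (poly s) u x by rewrite Gdef.
have [Pg Mg] := (GP g).1 Gg.
apply/seteqP; split => x.
  move=> Gx; split; first exact: ((GP x).1 Gx).1.
  by move=> i; rewrite inE => /asboolP; apply.
move=> [Px Tx]; apply/GP; split => //.
(* moving from g slightly away from x stays in [poly s], so g - x is
   orthogonal to u *)
have Hi : forall i : 'I_(size s), exists2 t, 0 < t & forall t', 0 < t' <= t ->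
    dotp (ca i) (g - t' *: (x - g)) <= cb i.
  move=> i; case: (boolP (i \in actF s G)) => iA.
    exists 1 => // t' _; rewrite dotpBr dotpZr dotpBr Tx //.
    by move: iA; rewrite inE => /asboolP /(_ g Gg) ->; lra.
  have := Hg i iA; rewrite -subr_gt0 => /(small_step (dotp (ca i) g - dotp (ca i) x)).
  move=> [t1 t10 Ht1]; exists t1 => // t' /Ht1.
  by rewrite dotpBr dotpZr dotpBr; lra.
have [t t0 Ht] := uniform_small_step Hi.
have Pz : poly s (g - t *: (x - g)) by apply/polyP => i; apply: Ht; rewrite t0 lexx.
have := Mg _ Pz; rewrite dotpBr dotpZr dotpBr => h.
have h2 : 0 <= dotp u x - dotp u g by rewrite -(pmulr_rge0 _ t0); lra.
by move=> y Py; have := Mg y Py; lra.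
Qed.

Lemma feasible_direction s w d : poly s w ->
  (forall i : 'I_(size s), dotp (ca i) w = cb i -> dotp (ca i) d <= 0) ->
  exists2 e, 0 < e & poly s (w + e *: d).
Proof.
move=> Pw Hd.
have Hi : forall i : 'I_(size s), exists2 t, 0 < t & forall t', 0 < t' <= t ->
    dotp (ca i) (w + t' *: d) <= cb i.
  move=> i; have := (polyP _ _).1 Pw i; rewrite le_eqVlt => /orP[/eqP e|lt].
    exists 1 => // t' /andP[t0 _]; rewrite dotpDr dotpZr e.
    have : t' * dotp (ca i) d <= 0 by rewrite pmulr_rle0 // Hd.
    lra.
  move: lt; rewrite -subr_gt0 => /(small_step (dotp (ca i) d)) [t t0 Ht].
  by exists t => // t' /Ht; rewrite dotpDr dotpZr; lra.
have [t t0 Ht] := uniform_small_step Hi; exists t => //; apply/polyP => i.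
by apply: Ht; rewrite t0 lexx.
Qed.

Lemma tcone_active s w x : poly s w -> tcone (poly s) [set w] x ->
  forall i : 'I_(size s), dotp (ca i) w = cb i -> dotp (ca i) x <= 0.
Proof.
move=> Pw [l [Hl ->]] i e; rewrite dotp_sumr big_seq; apply: sumr_le0 => p pl.
have [p0 [v [v' [-> Pv' ->]]]] := Hl p pl.
rewrite dotpZr dotpBr e; apply: mulr_ge0_le0 => //.
by have := (polyP _ _).1 Pv' i; lra.
Qed.

Lemma active_tcone s w d : poly s w ->
  (forall i : 'I_(size s), dotp (ca i) w = cb i -> dotp (ca i) d <= 0) ->
  tcone (poly s) [set w] d.
Proof.
move=> Pw Hd; have [e e0 Pe] := feasible_direction Pw Hd.
have -> : d = e^-1 *: ((w + e *: d) - w).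
  by rewrite addrAC subrr add0r scalerA mulVf ?gt_eqF // scale1r.
apply: cone_genZ; first by rewrite invr_ge0 ltW.
by apply: cone_gen_sub; exists w, (w + e *: d).
Qed.

Lemma exposed_tcone s w u : [set w] = exposed (poly s) u ->
  forall d, tcone (poly s) [set w] d -> dotp u d <= 0 /\ (dotp u d = 0 -> d = 0).
Proof.
move=> Ew d Td.
have [Pw Mw] : exposed (poly s) u w by rewrite -Ew.
have [e e0 Pe] := feasible_direction Pw (tcone_active Pw Td).
have := Mw _ Pe; rewrite dotpDr dotpZr => h.
have hd : dotp u d <= 0 by rewrite -(pmulr_rle0 _ e0); lra.
split => // ud0.
have : [set w] (w + e *: d).
  rewrite Ew; split => // y Py; rewrite dotpDr dotpZr ud0 mulr0 addr0; exact: Mw.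
move=> /= hz; have : e *: d = 0 by rewrite -(addKr w (e *: d)) hz addNr.
by move/eqP; rewrite scaler_eq0 gt_eqF //= => /eqP.
Qed.

Lemma vertex_tcone_pointed s w : face (poly s) [set w] ->
  forall d, lineal (tcone (poly s) [set w]) d -> d = 0.
Proof.
move=> [[u Ew] _] d [h1 h2].
have [a1 b1] := exposed_tcone Ew h1; have [a2 _] := exposed_tcone Ew h2.
by apply: b1; move: a2; rewrite dotpNr; lra.
Qed.

Definition active s w : {set 'I_(size s)} :=
  [set i : 'I_(size s) | dotp (ca i) w == cb i]%SET.

Lemma bounded_recession s w d : bounded_set (poly s) -> poly s w ->
  (forall j : 'I_(size s), dotp (ca j) d <= 0) -> d = 0.
Proof.
move=> [M HM] Pw nd.
have Pt : forall t, 0 <= t -> poly s (w + t *: d).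
  move=> t t0; apply/polyP => i; rewrite dotpDr dotpZr.
  have := (polyP _ _).1 Pw i; have : t * dotp (ca i) d <= 0 by apply: mulr_ge0_le0.
  lra.
apply/rowP => i; rewrite [RHS]mxE; apply/eqP; apply: contraT => di.
suff : False by [].
have M0 : `|w ord0 i| <= M := HM w Pw i.
have dpos : 0 < `|d ord0 i| by rewrite normr_gt0.
pose t := (M + `|w ord0 i| + 1) / `|d ord0 i|.
have t0 : 0 <= t by rewrite divr_ge0 // ?ltW //; have := normr_ge0 (w ord0 i); lra.
have h : `|w ord0 i + t * d ord0 i| <= M by have := HM _ (Pt t t0) i; rewrite !mxE.
have e1 : `|t * d ord0 i| = M + `|w ord0 i| + 1.
  by rewrite normrM ger0_norm // /t divfK // gt_eqF.
have e2 : `|t * d ord0 i| <= `|w ord0 i + t * d ord0 i| + `|w ord0 i|.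
  have := ler_normD (w ord0 i + t * d ord0 i) (- w ord0 i); rewrite normrN.
  by rewrite addrC addKr.
move: (w ord0 i) (t * d ord0 i) h e1 e2 M0 => a b h e1 e2 M0.
clear -h e1 e2 M0; lra.
Qed.

Lemma move_to_boundary s w d (j0 : 'I_(size s)) : poly s w -> 0 < dotp (ca j0) d ->
  exists r (j : 'I_(size s)), [/\ 0 <= r, poly s (w + r *: d),
    0 < dotp (ca j) d & dotp (ca j) (w + r *: d) = cb j].
Proof.
move=> Pw hj0.
pose F (j : 'I_(size s)) := (cb j - dotp (ca j) w) / dotp (ca j) d.
case: (@arg_minP _ _ _ j0 (fun j => 0 < dotp (ca j) d) F hj0) => j hj jmin.
have r0 : 0 <= F j.
  by apply: divr_ge0; [rewrite subr_ge0; exact: (polyP _ _).1 Pw j | exact: ltW].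
have rj : F j * dotp (ca j) d = cb j - dotp (ca j) w by rewrite divfK ?gt_eqF.
exists (F j), j; split => //; last by rewrite dotpDr dotpZr rj addrC subrK.
apply/polyP => i; rewrite dotpDr dotpZr.
case: (ltP 0 (dotp (ca i) d)) => h.
  by have := jmin i h; rewrite /F ler_pdivlMr // => h'; lra.
have := (polyP _ _).1 Pw i; have : F j * dotp (ca i) d <= 0 by apply: mulr_ge0_le0.
lra.
Qed.

(* A point that is the only solution of its tight constraints is a vertex,
   exposed by the sum of the tight constraint normals. *)
Lemma vertex_of_active s w : poly s w ->
  (forall x, poly s x -> (forall i, i \in active s w -> dotp (ca i) x = cb i) -> x = w) ->
  face (poly s) [set w].
Proof.
move=> Pw Sw; split; last by exists w.
exists (\sum_(i in active s w) ca i); apply/seteqP; split => x /=.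
  move=> ->; split => // y Py; rewrite !dotp_suml; apply: ler_sum => i.
  by rewrite inE => /eqP ->; exact: (polyP _ _).1 Py i.
move=> [Px Mx]; apply: Sw => //.
have := Mx w Pw; rewrite !dotp_suml => h.
have hs : \sum_(i in active s w) (cb i - dotp (ca i) x) = 0.
  apply/eqP; rewrite eq_le; apply/andP; split.
    rewrite sumrB subr_le0; apply: le_trans h; rewrite le_eqVlt; apply/orP; left.
    by apply/eqP; apply: eq_bigr => i; rewrite inE => /eqP.
  by apply: sumr_ge0 => i _; rewrite subr_ge0; exact: (polyP _ _).1 Px i.
move=> i iA; apply/eqP; rewrite eq_sym -subr_eq0; apply/eqP.
move: i iA; apply/psumr_eq0P => // i _.
by rewrite subr_ge0; exact: (polyP _ _).1 Px i.
Qed.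

(* Every face of a bounded polyhedron contains a vertex: a point of the face
   with the largest number of tight constraints is one. *)
Lemma face_has_vertex s G : bounded_set (poly s) -> face (poly s) G ->
  exists2 w, G w & face (poly s) [set w].
Proof.
move=> bP fG; have GT := face_tightset fG; have [_ [g0 Gg0]] := fG.
pose Pm m := `[< exists w, G w /\ #|active s w| = m >].
have exP : exists m, Pm m by exists #|active s g0|; apply/asboolP; exists g0.
have ubP : forall m, Pm m -> (m <= size s)%N.
  by move=> m /asboolP [w [_ <-]]; rewrite -[X in (_ <= X)%N]card_ord max_card.
case: (ex_maxnP exP ubP) => m /asboolP [w [Gw <-]] Hmax.
have Pw : poly s w := face_sub fG Gw.
exists w => //; apply: vertex_of_active => // x Px Tx.
case: (pselect (x = w)) => // nxw; exfalso.
have tdw : forall i, i \in active s w -> dotp (ca i) (x - w) = 0.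
  by move=> i iA; rewrite dotpBr Tx //; move: iA; rewrite inE => /eqP ->; rewrite subrr.
case: (pselect (exists j : 'I_(size s), 0 < dotp (ca j) (x - w))) => [[j0 hj0]|nj].
  have [r [j [r0 Pz hj Tj]]] := move_to_boundary Pw hj0.
  have Gz : G (w + r *: (x - w)).
    rewrite GT; split => // i iA.
    have iw : i \in active s w.
      by rewrite inE in iA; move/asboolP: iA => /(_ _ Gw) h; rewrite inE h.
    by rewrite dotpDr dotpZr tdw // mulr0 addr0; move: iw; rewrite inE => /eqP.
  have : active s w \proper active s (w + r *: (x - w)).
    apply/properP; split.
      apply/fintype.subsetP => i iw; rewrite inE dotpDr dotpZr tdw // mulr0 addr0.
      by move: iw; rewrite inE.
    exists j; first by rewrite inE Tj.
    by apply/negP => /tdw h0; move: hj; rewrite h0 ltxx.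
  move/proper_card; rewrite ltnNge; move/negP; apply.
  by apply: Hmax; apply/asboolP; exists (w + r *: (x - w)).
apply: nxw; apply/eqP; rewrite -subr_eq0; apply/eqP.
apply: (bounded_recession bP Pw) => j; rewrite leNgt; apply/negP => h.
by apply: nj; exists j.
Qed.

Lemma faces_finite s : finite_set (face (poly s)).
Proof.
apply: (@sub_finite_set _ _ ((fun A => tightset A) @` [set: {set 'I_(size s)}])).
  by move=> G fG; exists (actF s G) => //; rewrite -face_tightset.
exact: finite_image.
Qed.

Lemma vertices_finite s : finite_set (Vert (poly s)).
Proof.
apply: (@sub_finite_set _ _ ((fun A => xget 0 (tightset A)) @` [set: {set 'I_(size s)}])).
  move=> v fv; exists (actF s [set v]) => //; rewrite -face_tightset //.
  exact: xget_unique.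
exact: finite_image.
Qed.

(* If P lies in p + C_w for a vertex w of [poly s] and p is in P, then p is a
   vertex of P, exposed by any form exposing w. *)
Lemma vertex_transfer s w (P : set V) p : face (poly s) [set w] -> P p ->
  (forall x, P x -> tcone (poly s) [set w] (x - p)) -> face P [set p].
Proof.
move=> [[u Ew] _] Pp Tp; split; last by exists p.
exists u; apply/seteqP; split => x /=.
  move=> ->; split => // y Py; have [h _] := exposed_tcone Ew (Tp y Py).
  by move: h; rewrite dotpBr subr_le0.
move=> [Px Mx]; have := Mx p Pp => h.
have [h1 h2] := exposed_tcone Ew (Tp x Px).
apply/eqP; rewrite -subr_eq0; apply/eqP; apply: h2.
by move: h1; rewrite dotpBr; lra.
Qed.

(* If Sigma_P coarsens Sigma_Q and covers its support, the normal cone of Q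
   at a vertex w lies in a normal cone of P: the cone of Sigma_P containing
   an exposing form of w is a union of cones of Sigma_Q, and the one holding
   that form is the normal cone at w. *)
Lemma vertex_ncone_sub s (P : set V) w : face (poly s) [set w] ->
  coarsens P (poly s) -> fan_support (poly s) `<=` fan_support P ->
  exists2 F, face P F & ncone (poly s) [set w] `<=` ncone P F.
Proof.
move=> fw co fs; have [[u Ew] _] := fw.
have [Pw Mw] : exposed (poly s) u w by rewrite /exposed -Ew.
have fsu : fan_support (poly s) u.
  exists (ncone (poly s) [set w]); split; first by exists [set w].
  by move=> x y -> Py; exact: Mw.
have [N [[F [fF ->]] NFu]] := fs _ fsu.
have [S [SQ NE]] := co _ (ex_intro _ F (conj fF erefl)).
have : [set u0 | exists K, S K /\ K u0] u by rewrite -NE.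
move=> [K [SK Ku]]; have [G [fG KE]] := SQ _ SK.
have Gw : G = [set w].
  have gw : forall x, G x -> x = w.
    move=> x Gx; have : [set w] x; last by [].
    rewrite Ew; split; first exact: face_sub fG x Gx.
    by move=> y Py; move: Ku; rewrite KE => /(_ x y Gx Py).
  have [_ [g Gg]] := fG; apply/seteqP; split => x; first by move/gw.
  by move=> /= ->; rewrite -(gw g Gg).
by exists F => //; rewrite NE -Gw -KE => z Kz; exists K.
Qed.

Lemma deformation_vertex s (P : set V) w : face (poly s) [set w] ->
  coarsens P (poly s) -> fan_support (poly s) `<=` fan_support P ->
  exists p, [/\ P p, forall x, P x -> tcone (poly s) [set w] (x - p) & face P [set p]].
Proof.
move=> fw co fs; have [F fF sub] := vertex_ncone_sub fw co fs.
have Pw : poly s w by apply: (face_sub fw).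
have [_ [p Fp]] := fF; have Pp := face_sub fF Fp.
have Tp : forall x, P x -> tcone (poly s) [set w] (x - p).
  move=> x Px; apply: active_tcone => // i ei; rewrite dotpBr subr_le0.
  apply: (sub (ca i) _ p x Fp Px) => x' y -> Py.
  by rewrite ei; exact: (polyP _ _).1 Py i.
by exists p; split => //; exact: vertex_transfer fw Pp Tp.
Qed.

Lemma dual_fan_cone (Q C : set V) : dual_fan Q C -> is_cone C.
Proof. by move=> [G [_ ->]]; exact: cone_gen_cone. Qed.

Lemma tight_vertex_tcone s w (P : set V) p u : face (poly s) [set w] -> P p ->
  (forall x, P x -> tcone (poly s) [set w] (x - p)) ->
  tightly_contains (poly s) (translate (tcone (poly s) [set w]) u) P <-> u = p.
Proof.
move=> fw Pp Tp; have pw := vertex_tcone_pointed fw.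
have cw : is_cone (tcone (poly s) [set w]) by exact: cone_gen_cone.
split => [[C' [v' [dC' eq' sub' [q [Pq lq]]]]]|->].
  have [eC l'] := translate_inj cw (dual_fan_cone dC') eq'.
  rewrite -eC in l' lq sub'.
  have v'u : v' = u by apply/eqP; rewrite -subr_eq0; apply/eqP; apply: pw l'.
  have qv : q = v' by move/translateP: lq => /pw /eqP; rewrite subr_eq0 => /eqP.
  subst v' q; have /translateP h2 := sub' p Pp.
  apply/eqP; rewrite -subr_eq0; apply/eqP; apply: pw; split; first exact: Tp.
  by rewrite opprB.
exists (tcone (poly s) [set w]), p; split => //; first by exists [set w].
  by move=> x Px; apply/translateP; exact: Tp.
exists p; split => //; apply/translateP; rewrite subrr; split; first exact: cone_gen0.
by rewrite oppr0; exact: cone_gen0.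
Qed.

Lemma tight_translate (Q C : set V) v w (P : set V) p : dual_fan Q C ->
  tcone Q [set w] `<=` C -> P p -> (forall x, P x -> tcone Q [set w] (x - p)) ->
  tightly_contains Q (translate C v) P <-> lineal C (p - v).
Proof.
move=> dC sub Pp Tp; have cC := dual_fan_cone dC; have [_ CD _] := cC.
split => [[C' [v' [dC' eq' sub' [q [Pq lq]]]]]|lp].
  have [eC l'] := translate_inj cC (dual_fan_cone dC') eq'.
  rewrite -eC in l' lq.
  move/translateP: lq => lq.
  have /translateP h2 : translate C v' p by rewrite eC -eq'; exact: sub'.
  have lp' : lineal C (p - v').
    split => //.
    have -> : - (p - v') = (v' - q) + (q - p) by rewrite opprB addrA subrK.
    apply: CD; first by move: lq.2; rewrite opprB.
    by apply: sub; exact: Tp.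
  have -> : p - v = (p - v') + (v' - v) by rewrite addrA subrK.
  by apply: linealD.
exists C, v; split => //.
  move=> x Px; apply/translateP.
  have -> : x - v = (x - p) + (p - v) by rewrite addrA subrK.
  by apply: CD; [apply: sub; exact: Tp | exact: lp.1].
by exists p; split => //; apply/translateP.
Qed.

Lemma XV_tran (Q VV : set V) K : XV Q VV K -> tran Q K.
Proof.
move=> [C [v [[w [fw ->]] _ ->]]]; exists (tcone Q [set w]), v; split => //.
by exists [set w].
Qed.

Lemma dual_fan_finite s : finite_set (dual_fan (poly s)).
Proof.
apply: (@sub_finite_set _ _ (tcone (poly s) @` face (poly s))).
  by move=> C [G [fG ->]]; exists G.
exact/finite_image/faces_finite.
Qed.

Lemma sum_seq_delta (T : eqType) (M : zmodType) (r : seq T) p (a : M) :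
  uniq r -> p \in r -> \sum_(u <- r) (if u == p then a else 0) = a.
Proof.
move=> ur pr; rewrite -big_mkcond -big_filter.
rewrite (_ : [seq u <- r | u == p] = [:: p]) ?big_seq1 //.
by rewrite -(filter_pred1_uniq ur pr); apply: eq_filter => u.
Qed.

Section Extension.
Variables (s : seq (V * R)) (VV : set V) (l : seq V).
Hypotheses (bounded_Q : bounded_set (poly s)) (VV_l : forall u, VV u <-> u \in l)
  (l_uniq : uniq l).
Local Notation Q := (poly s).

Definition vertex_rep (K : set V) (t : set V * V * V) : Prop :=
  [/\ dual_fan Q t.1.1, K = translate t.1.1 t.1.2, face Q [set t.2] &
      tcone Q [set t.2] `<=` t.1.1].

(* A presentation chosen by classical choice (arbitrary outside tran). *)
Definition rep (K : set V) : set V * V * V :=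
  match pselect (exists t, vertex_rep K t) with
  | left h => proj1_sig (cid h)
  | right _ => (set0, 0, 0)
  end.

(* Every translated tangent cone has such a presentation, since every face
   of the polytope Q contains a vertex w, and C_w contains C_F. *)
Lemma rep_spec K : tran Q K -> vertex_rep K (rep K).
Proof.
move=> tK; rewrite /rep; case: pselect => [h|[]]; first exact: (proj2_sig (cid h)).
move: tK => [C [v [[G [fG eC] eK]]]].
have [w Gw fw] := face_has_vertex bounded_Q fG.
exists (C, v, w); split => //=; first by exists G.
rewrite eC; apply: cone_gen_mono => d [v1 [v' [/= -> Pv' ->]]].
by exists w, v'.
Qed.

Definition ext (g : set V -> int) (K : set V) : int :=
  if `[< XV Q VV K >] then g K else
  if `[< tran Q K >] then
    \sum_(u <- l) (if `[< lineal (rep K).1.1 (u - (rep K).1.2) >]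
                   then g (translate (tcone Q [set (rep K).2]) u) else 0)
  else 0.

Lemma ext_XV g K : XV Q VV K -> ext g K = g K.
Proof. by move=> xK; rewrite /ext asboolT. Qed.

Lemma ext_inj g h : ZX (XV Q VV) g -> ZX (XV Q VV) h -> ext g = ext h -> g = h.
Proof.
move=> Zg Zh e; apply: funext => K.
case: (pselect (XV Q VV K)) => xK; last by rewrite Zg // Zh.
by rewrite -(ext_XV g xK) -(ext_XV h xK) e.
Qed.

(* E lands in the finitely supported functions on tran(Sigma_Q^vee): a
   nonzero value at K forces K = C + u with C a tangent cone and u in VV. *)
Lemma ext_support g : ZX (XV Q VV) g -> ZXfin (tran Q) (ext g).
Proof.
move=> Zg; split.
  move=> K nK; rewrite /ext asboolF; last by move/XV_tran.
  by rewrite asboolF.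
have VVfin : finite_set VV.
  by apply/(finite_seqP VV); exists l; apply/seteqP; split => u /VV_l.
apply: (@sub_finite_set _ _ [set translate C u | C in dual_fan Q & u in VV]);
  last exact: finite_image2 (dual_fan_finite s) VVfin.
move=> K /= nz; rewrite /ext in nz.
case: (pselect (XV Q VV K)) => [[C [v [[w [fw eC]] Vv eK]]]|nX].
  by exists C; [rewrite eC; exists [set w] | exists v].
move: nz; rewrite asboolF //.
case: (pselect (tran Q K)) => tK; last by rewrite asboolF.
rewrite asboolT //; have := rep_spec tK.
case: (rep K) => [[C v] w] /= [dC eK fw sub] nz.
case: (pselect (exists2 u, u \in l & lineal C (u - v))) => [[u ul lu]|H].
  exists C => //; exists u; first exact/VV_l.
  by rewrite eK (translate_shift (dual_fan_cone dC) lu).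
move: nz; rewrite big1_seq ?eqxx // => u /andP[_ ul].
by rewrite asboolF // => h; apply: H; exists u.
Qed.

Lemma ext_sub g h : ext (fun K => g K - h K) = (fun K => ext g K - ext h K).
Proof.
apply: funext => K; rewrite /ext.
case: ifP => _ //; case: ifP => _; last by rewrite subr0.
by rewrite -sumrB; apply: eq_bigr => u _; case: ifP => _ //; rewrite subr0.
Qed.

Lemma ext_lincomb (I : Type) (r : seq I) (c : I -> int) (h : I -> set V -> int) K :
  ext (fun K => \sum_(i <- r) c i * h i K) K = \sum_(i <- r) c i * ext (h i) K.
Proof.
rewrite /ext; case: ifP => _ //; case: ifP => _; last first.
  by rewrite big1 // => i _; rewrite mulr0.
case: (rep K) => [[C v] w] /=.
transitivity (\sum_(u <- l) \sum_(i <- r)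
   (if `[< lineal C (u - v) >] then c i * h i (translate (tcone Q [set w]) u) else 0)).
  by apply: eq_bigr => u _; case: ifP => _ //; rewrite big1.
rewrite exchange_big; apply: eq_bigr => i _; rewrite mulr_sumr.
by apply: eq_bigr => u _; case: ifP => _ //; rewrite mulr0.
Qed.

(* The vertex p of P with P in p + C_w lies in VV, it is the only
   u with C_w + u tightly containing P, and C + v tightly contains P exactly
   when p - v lies in lineal(C). *)
Lemma ext_tight P : Def_restr Q VV P ->
  ext (tight_vec Q (XV Q VV) P) = tight_vec Q (tran Q) P.
Proof.
move=> [[[_ _ coP] fsP] _ VP]; apply: funext => K.
case: (pselect (XV Q VV K)) => xK.
  rewrite ext_XV // /tight_vec; congr (if _ then _ else _); apply: asbool_equiv_eq.
  by split => -[_ h]; split => //; exact: XV_tran xK.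
rewrite /ext asboolF //.
case: (pselect (tran Q K)) => tK; last by rewrite asboolF // /tight_vec asboolF // => -[].
rewrite asboolT //; have := rep_spec tK.
case: (rep K) => [[C v] w] /= [dC eK fw sub].
have [p [Pp Tp fp]] : exists p, [/\ P p, forall x, P x -> tcone Q [set w] (x - p)
                                  & face P [set p]].
  by apply: deformation_vertex fw coP _; rewrite fsP.
have tight_Cw u : VV u -> tight_vec Q (XV Q VV) P (translate (tcone Q [set w]) u) =
                           if u == p then 1 else 0.
  move=> Vu; rewrite /tight_vec; congr (if _ then _ else _).
  apply: asbool_equiv_eqP; first exact: eqP.
  rewrite -(tight_vertex_tcone u fw Pp Tp); split => [[] //|tc]; split => //.
  by exists (tcone Q [set w]), u; split => //; exists w.
rewrite (eq_big_seq (fun u => if u == p then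
                       (if `[< lineal C (p - v) >] then 1 else 0) else 0)); last first.
  by move=> u /VV_l Vu; rewrite tight_Cw //; case: eqP => [->|_]; case: ifP.
rewrite sum_seq_delta //; last exact/VV_l/VP.
rewrite /tight_vec; congr (if _ then _ else _); apply: asbool_equiv_eq.
rewrite eK (tight_translate v dC sub Pp Tp) -eK.
by split => [lp|[]] //; split.
Qed.

End Extension.

End Geometry.

(* A map on the Z-span of a family of indicator functions that commutes with
   differences is Z-linear, hence determined by its values on the indicators. *)
Section ZSpan.
Variables (R : realType) (n : nat).
Local Notation V := 'rV[R]_n.
Variables (S : set (set V)) (L : (V -> int) -> (set V -> int)).
Hypothesis L_sub : forall f g, zspan S f -> zspan S g ->
  L (fun x => f x - g x) = (fun K => L f K - L g K).

Lemma zspan0 : zspan S (fun _ => 0).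
Proof. by exists [::]; split => //; apply: funext => x; rewrite big_nil. Qed.

Lemma zspan_indic P : S P -> zspan S (indic P).
Proof.
move=> SP; exists [:: (1, P)]; split; first by move=> p; rewrite inE => /eqP ->.
by apply: funext => x; rewrite big_seq1 mul1r.
Qed.

Lemma zspanN f : zspan S f -> zspan S (fun x => - f x).
Proof.
move=> [r [Hr ->]]; exists [seq (- p.1, p.2) | p <- r]; split.
  by move=> p /mapP [q /Hr ? ->].
by apply: funext => x; rewrite big_map -sumrN; apply: eq_bigr => p _; rewrite mulNr.
Qed.

Lemma zspanZ c f : zspan S f -> zspan S (fun x => c * f x).
Proof.
move=> [r [Hr ->]]; exists [seq (c * p.1, p.2) | p <- r]; split.
  by move=> p /mapP [q /Hr ? ->].
by apply: funext => x; rewrite big_map mulr_sumr; apply: eq_bigr => p _; rewrite mulrA.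
Qed.

Lemma linear0 : L (fun _ => 0) = fun _ => 0.
Proof.
have := L_sub zspan0 zspan0.
rewrite (_ : (fun _ : V => (0 : int) - 0) = fun _ => 0); last first.
  by apply: funext => x; rewrite subrr.
by move=> ->; apply: funext => K; rewrite subrr.
Qed.

Lemma linearD f g : zspan S f -> zspan S g ->
  L (fun x => f x + g x) = fun K => L f K + L g K.
Proof.
move=> zf zg; have LN : L (fun x => - g x) = fun K => - L g K.
  have := L_sub zspan0 zg; rewrite linear0.
  rewrite (_ : (fun x => (0 : int) - g x) = fun x => - g x); last first.
    by apply: funext => x; rewrite sub0r.
  by move=> ->; apply: funext => K; rewrite sub0r.
have := L_sub zf (zspanN zg).
rewrite (_ : (fun x => f x - - g x) = fun x => f x + g x); last first.
  by apply: funext => x; rewrite opprK.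
by move=> ->; apply: funext => K; rewrite LN opprK.
Qed.

Lemma linearZ c f : zspan S f -> L (fun x => c * f x) = fun K => c * L f K.
Proof.
move=> zf; elim/int_rect: c => [|m IH|m IH].
- rewrite (_ : (fun x => 0 * f x) = fun _ => 0); last first.
    by apply: funext => x; rewrite mul0r.
  by rewrite linear0; apply: funext => K; rewrite mul0r.
- rewrite (_ : (fun x => m.+1%:Z * f x) = fun x => m%:Z * f x + f x); last first.
    by apply: funext => x; rewrite intS mulrDl mul1r addrC.
  rewrite linearD ?IH //; last exact: zspanZ.
  by apply: funext => K; rewrite intS mulrDl mul1r addrC.
- rewrite (_ : (fun x => - m.+1%:Z * f x) = fun x => - m%:Z * f x - f x); last first.
    by apply: funext => x; rewrite intS opprD mulrDl mulN1r addrC.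
  rewrite L_sub ?IH //; last exact: zspanZ.
  by apply: funext => K; rewrite intS opprD mulrDl mulN1r addrC.
Qed.

Lemma linear_lincomb (t : set V -> set V -> int) (r : seq (int * set V)) :
  (forall P, S P -> L (indic P) = t P) -> (forall p, p \in r -> S p.2) ->
  L (fun x => \sum_(p <- r) p.1 * indic p.2 x) = fun K => \sum_(p <- r) p.1 * t p.2 K.
Proof.
move=> Lt; elim: r => [|[c P] r IH] Sr.
  rewrite (_ : (fun x => _) = fun _ => 0); last by apply: funext => x; rewrite big_nil.
  by rewrite linear0; apply: funext => K; rewrite big_nil.
have SP : S P by apply: (Sr (c, P)); rewrite mem_head.
have Sr' : forall p, p \in r -> S p.2 by move=> p pr; apply: Sr; rewrite inE pr orbT.
rewrite (_ : (fun x => _) = fun x => c * indic P x + \sum_(p <- r) p.1 * indic p.2 x);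
  last by apply: funext => x; rewrite big_cons.
rewrite linearD ?linearZ ?IH ?Lt //; first by apply: funext => K; rewrite big_cons.
- exact: zspan_indic.
- exact/zspanZ/zspan_indic.
- by exists r.
Qed.

End ZSpan.

Theorem proposition2p9 (R : realType) (n : nat) (Q VV : set 'rV[R]_n)
  (FV F : ('rV[R]_n -> int) -> (set 'rV[R]_n -> int)) :
  polytope Q ->
  (exists Q0, Def Q Q0 /\ VV = Vert Q0) ->
  (* F_VV : I(Def(Q)|_VV) -> Z^{X_VV} is Z-linear and given on generators *)
  (forall f g, zspan (Def_restr Q VV) f -> zspan (Def_restr Q VV) g ->
     FV (fun x => f x - g x) = (fun K => FV f K - FV g K)) ->
  (forall P, Def_restr Q VV P -> FV (indic P) = tight_vec Q (XV Q VV) P) ->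
  (* F : I(Def^+(Q)) -> Z^{(+) tran} is Z-linear and given on generators *)
  (forall f g, zspan (Defp Q) f -> zspan (Defp Q) g ->
     F (fun x => f x - g x) = (fun K => F f K - F g K)) ->
  (forall P, Defp Q P -> F (indic P) = tight_vec Q (tran Q) P) ->
  exists E : (set 'rV[R]_n -> int) -> (set 'rV[R]_n -> int),
    [/\ (forall g, ZX (XV Q VV) g -> ZXfin (tran Q) (E g)),
        (forall g h, ZX (XV Q VV) g -> ZX (XV Q VV) h ->
           E (fun K => g K - h K) = (fun K => E g K - E h K)),
        (forall g h, ZX (XV Q VV) g -> ZX (XV Q VV) h -> E g = E h -> g = h) &
        (forall f, zspan (Def_restr Q VV) f -> E (FV f) = F f)].
Proof.
move=> [[s Qs] bQ _] [Q0 [[[[s0 Q0s] _ _] _] VVE]] FV_sub FV_gen F_sub F_gen.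
have QE : Q = poly s := Qs; clear Qs; subst Q.
have VV_fin : finite_set VV by rewrite VVE (_ : Q0 = poly s0) //; exact: vertices_finite.
have [l0 VVl0] := (finite_seqP VV).1 VV_fin.
have VV_l u : VV u <-> u \in undup l0 by rewrite mem_undup VVl0.
exists (ext s VV (undup l0)); split.
- exact: ext_support bQ VV_l.
- by move=> g h _ _; exact: ext_sub.
- exact: ext_inj.
(* both sides are linear, so it suffices to compare them on generators *)
move=> f [r [Sr ->]].
rewrite (linear_lincomb FV_sub FV_gen Sr).
rewrite (linear_lincomb F_sub F_gen (r := r)); last by move=> p /Sr [[]].
apply: funext => K; rewrite ext_lincomb; apply: eq_big_seq => p /Sr Sp.
by rewrite (ext_tight bQ VV_l (undup_uniq l0) Sp).
Qed.
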